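(* Let $\phi$ be a connected circuit all of whose constraints are strictly terraced. Then $[\![\phi]\!]$ is strictly terraced.
   Context: $e_i$ is the characteristic vector of $\{i\}$ and $\oplus$ is coordinatewise addition mod 2. A signature $F:\{0,1\}^J\to\mathbb{Q}_{\ge0}$ is strictly terraced if for all $x\in\{0,1\}^J$ and $i,j\in J$, $F(x)=0$ implies $F(x\oplus e_i)=F(x\oplus e_j)$. A circuit $\phi$ consists of: a finite set $J$ of incidences; a finite set $V$ of vertices with sets $J_v$ partitioning $J$; a set $A\subseteq J$ of external edges; a partition $E$ of $J\setminus A$ into pairs (internal edges); and constraints $F_v:\{0,1\}^{J_v}\to\mathbb{Q}_{\ge0}$. An assignment is $x\in\{0,1\}^J$ with $x_i=x_j$ for all $\{i,j\}\in E$; the signature is $[\![\phi]\!]:\{0,1\}^A\to\mathbb{Q}_{\ge0}$, $[\![\phi]\!](x)=\sum_{x'}\prod_vF_v(x'|_{J_v})$ over assignments $x'$ extending $x$. $\phi$ is connected if the multigraph on $V$ with an edge $uv$ for each $\{i,j\}\in E$, $i\in J_u$, $j\in J_v$, is connected. *)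

From HB Require Import structures.
From mathcomp Require Import all_boot all_order all_algebra.
Set Implicit Arguments. Unset Strict Implicit. Unset Printing Implicit Defensive.
Import Order.TTheory GRing.Theory Num.Theory.
Local Open Scope ring_scope.

Definition flip (K : finType) (x : {ffun K -> bool}) (i : K) : {ffun K -> bool} :=
  [ffun k => if k == i then ~~ x k else x k].

Definition strictly_terraced (K : finType) (F : {ffun K -> bool} -> rat) : Prop :=
  forall (x : {ffun K -> bool}) (i j : K), F x = 0 -> F (flip x i) = F (flip x j).

(* A circuit is given by: incidences J, vertices V, owner : J -> V
   (so J_v = {i | owner i = v}), external edges A, internal edges E (a
   partition of J \ A into pairs), constraints F v : {0,1}^{J_v} -> Q. *)
Definition is_circuit (J : finType) (A : {set J}) (E : {set {set J}}) : Prop :=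
  partition E (~: A) /\ (forall e, e \in E -> #|e| = 2%N).

Definition is_assignment (J : finType) (E : {set {set J}}) (x : {ffun J -> bool}) : bool :=
  [forall e in E, forall i in e, forall j in e, x i == x j].

Definition circuit_sig (J V : finType) (owner : J -> V) (A : {set J})
    (E : {set {set J}})
    (F : forall v : V, {ffun {i : J | owner i == v} -> bool} -> rat)
    (x : {ffun {i : J | i \in A} -> bool}) : rat :=
  \sum_(x' : {ffun J -> bool} |
          is_assignment E x' && [forall k : {i : J | i \in A}, x' (val k) == x k])
     \prod_(v : V) F v [ffun k : {i : J | owner i == v} => x' (val k)].

Definition circ_adj (J V : finType) (owner : J -> V) (E : {set {set J}}) : rel V :=
  fun u w => [exists e in E, exists i in e, exists j in e,
                [&& i != j, owner i == u & owner j == w]].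

Definition circuit_connected (J V : finType) (owner : J -> V) (E : {set {set J}}) : Prop :=
  forall u w : V, connect (circ_adj owner E) u w.

Arguments circuit_sig {J V} owner A E F x.

From HB Require Import structures.
From mathcomp Require Import all_boot all_order all_algebra.
Import Order.TTheory GRing.Theory Num.Theory.
Local Open Scope ring_scope.

(* Fix an external input x with [[phi]](x) = 0.  Since all the
   weights are nonnegative, every assignment y extending x has weight
   W(y) = prod_v F_v(y|J_v) equal to 0.  For an arbitrary incidence k put
     Phi(k) = sum_{y extends x} W(y (+) e_k),
   so that Phi(a) = [[phi]](x (+) e_a) for an external incidence a (flipping
   an external coordinate is a bijection on assignments).  Then:
   - Phi is constant on each set J_v: a vanishing weight W(y) = 0 has a zero
     factor; if it sits at v the strict terracing of F_v equalises the flipped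
     factors, otherwise the zero factor kills both weights;
   - Phi agrees on the two ends k, k' of an internal edge: flipping both ends
     is an involution on the assignments extending x, exchanging the two sums.
   By connectivity of the circuit graph Phi is then constant on all of J,
   which gives [[phi]](x (+) e_i) = [[phi]](x (+) e_j). *)

Lemma flipK (K : finType) (y : {ffun K -> bool}) (k : K) : flip (flip y k) k = y.
Proof. by apply/ffunP => t; rewrite !ffunE; case: eqP => // _; rewrite negbK. Qed.

Lemma flipC (K : finType) (y : {ffun K -> bool}) (a b : K) :
  flip (flip y a) b = flip (flip y b) a.
Proof. by apply/ffunP => t; rewrite !ffunE; case: (t == a); case: (t == b). Qed.

Lemma connect_fibres (J V : finType) (T : Type) (o : J -> V) (r : rel V)
    (phi : J -> T) :
  (forall k k', o k = o k' -> phi k = phi k') ->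
  (forall u w, r u w -> exists k k', [/\ o k = u, o k' = w & phi k = phi k']) ->
  forall k k', connect r (o k) (o k') -> phi k = phi k'.
Proof.
move=> fibre edge k k' /connectP [p].
have [u ok] : {u | o k = u} by exists (o k).
rewrite ok => pth lst.
elim: p u k ok pth lst => [|w p IH] u k ok /= pth lst.
  by apply: fibre; rewrite ok lst.
have /andP [ruw pth'] := pth.
have [l [l' [ol ol' ll']]] := edge u w ruw.
rewrite (fibre k l); last by rewrite ok ol.
by rewrite ll'; exact: IH _ _ ol' pth' lst.
Qed.

Section Circuit.

Variables (J V : finType) (owner : J -> V) (A : {set J}) (E : {set {set J}}).
Variable F : forall v : V, {ffun {i : J | owner i == v} -> bool} -> rat.
Set Implicit Arguments.
Unset Strict Implicit.

Definition restr (y : {ffun J -> bool}) (v : V) : {ffun {i : J | owner i == v} -> bool} :=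
  [ffun t => y (val t)].

Definition weight (y : {ffun J -> bool}) : rat := \prod_(v : V) F v (restr y v).

Definition extends (x : {ffun {i : J | i \in A} -> bool}) (y : {ffun J -> bool}) : bool :=
  is_assignment E y && [forall a : {i : J | i \in A}, y (val a) == x a].

Lemma circuit_sigE x : circuit_sig owner A E F x = \sum_(y | extends x y) weight y.
Proof. by []. Qed.

Lemma restr_flip_other y k v : owner k != v -> restr (flip y k) v = restr y v.
Proof.
move=> nkv; apply/ffunP => t; rewrite !ffunE.
by case: eqP => // tk; move: nkv (valP t); rewrite -tk => /negPf ->.
Qed.

Lemma restr_flip_same y k v (hk : owner k == v) :
  restr (flip y k) v = flip (restr y v) (exist _ k hk).
Proof. by apply/ffunP => t; rewrite !ffunE -val_eqE. Qed.

Lemma weight_flip y k u (hk : owner k == u) :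
  weight (flip y k) =
    F u (flip (restr y u) (exist _ k hk)) * \prod_(v | v != u) F v (restr y v).
Proof.
rewrite /weight (bigD1 u) //= restr_flip_same; congr (_ * _).
by apply: eq_bigr => v nvu; rewrite restr_flip_other // (eqP hk) eq_sym.
Qed.

Lemma weight_flip_vertex y k k' :
  (forall v, strictly_terraced (F v)) ->
  weight y = 0 -> owner k = owner k' -> weight (flip y k) = weight (flip y k').
Proof.
move=> terraced /eqP /prodf_eq0 [v _ /eqP Fv0] okk'.
have hk : owner k == owner k by [].
have hk' : owner k' == owner k by rewrite okk'.
rewrite (weight_flip _ hk) (weight_flip _ hk').
have [Fu0 | Fu_neq0] := eqVneq (F (owner k) (restr y (owner k))) 0.
  by rewrite (terraced _ _ _ (exist _ k' hk') Fu0).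
have nvu : v != owner k by apply: contraNneq Fu_neq0 => vu; rewrite -vu Fv0.
by rewrite (bigD1 v) //= Fv0 mul0r !mulr0.
Qed.

Hypothesis circuit : is_circuit A E.

Lemma edge_not_external e k : e \in E -> k \in e -> k \notin A.
Proof.
have [/and3P [/eqP cov _ _] _] := circuit.
move=> eE ke; have : k \in cover E by apply/bigcupP; exists e.
by rewrite cov inE.
Qed.

Lemma extends_flip_external x (a : {i : J | i \in A}) y :
  extends (flip x a) (flip y (val a)) = extends x y.
Proof.
congr (_ && _).
  apply: eq_forallb_in => e eE; apply: eq_forallb_in => i ie.
  apply: eq_forallb_in => j je; rewrite !ffunE.
  have notA t : t \in e -> t != val a.
    by move=> te; apply: contraNneq (edge_not_external eE te) => ->; exact: valP.
  by rewrite (negPf (notA i ie)) (negPf (notA j je)).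
apply: eq_forallb => t; rewrite !ffunE val_eqE.
by case: (t == a); case: (y _); case: (x _).
Qed.

Definition flip_edge (y : {ffun J -> bool}) (k k' : J) := flip (flip y k) k'.

Lemma flip_edgeK y k k' : flip_edge (flip_edge y k k') k k' = y.
Proof. by rewrite /flip_edge [flip (flip (flip y k) k') k]flipC !flipK. Qed.

Lemma edge_pair e k k' : e \in E -> k \in e -> k' \in e -> k != k' -> e = [set k; k'].
Proof.
have [_ card2] := circuit.
move=> eE ke k'e nkk'; apply/eqP; rewrite eq_sym eqEcard cards2 nkk' card2 //.
by rewrite leqnn andbT; apply/subsetP => t; rewrite !inE => /orP [] /eqP ->.
Qed.

Lemma mem_edge e e0 i : e \in E -> e0 \in E -> i \in e -> (i \in e0) = (e == e0).
Proof.
have [/and3P [_ triv _] _] := circuit.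
move=> eE e0E ie; apply/idP/eqP => [ie0 | <- //].
by rewrite -(def_pblock triv eE ie) (def_pblock triv e0E ie0).
Qed.

(* Flipping both ends of an internal edge preserves being an assignment
   extending x: the edge stays consistent and no other coordinate of an edge
   or of the input moves. *)
Lemma extends_flip_edge x y e k k' :
  e \in E -> k \in e -> k' \in e -> k != k' ->
  extends x (flip_edge y k k') = extends x y.
Proof.
move=> eE ke k'e nkk'; have e_kk' := edge_pair eE ke k'e nkk'.
have flipE i : flip_edge y k k' i = (i \in e) (+) y i.
  rewrite !ffunE e_kk' !inE; case: (eqVneq i k') => [-> | _].
    by rewrite eq_sym (negPf nkk') orbT.
  by case: (i == k); rewrite ?orbF //= addTb.
congr (_ && _).
  apply: eq_forallb_in => e' e'E; apply: eq_forallb_in => i ie'.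
  apply: eq_forallb_in => j je'.
  rewrite !flipE (mem_edge e'E eE ie') (mem_edge e'E eE je').
  by case: (e' == e); case: (y i); case: (y j).
apply: eq_forallb => a; rewrite flipE.
by have /negPf -> : val a \notin e by apply: contraL (valP a); exact: edge_not_external.
Qed.

Definition flip_sum x (k : J) : rat := \sum_(y | extends x y) weight (flip y k).

Lemma circuit_sig_flip x (a : {i : J | i \in A}) :
  circuit_sig owner A E F (flip x a) = flip_sum x (val a).
Proof.
rewrite circuit_sigE /flip_sum (reindex (fun y => flip y (val a))) /=.
  by apply: eq_bigl => y; rewrite extends_flip_external.
by apply: onW_bij; exists (fun y => flip y (val a)) => y; exact: flipK.
Qed.

Lemma flip_sum_edge x e k k' :
  e \in E -> k \in e -> k' \in e -> k != k' -> flip_sum x k = flip_sum x k'.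
Proof.
move=> eE ke k'e nkk'; rewrite /flip_sum (reindex (fun y => flip_edge y k k')) /=.
  apply: eq_big => y; first exact: extends_flip_edge eE ke k'e nkk'.
  by rewrite /flip_edge flipC flipK.
by apply: onW_bij; exists (fun y => flip_edge y k k') => y; exact: flip_edgeK.
Qed.

Lemma flip_sum_vertex x k k' :
  (forall v y, 0 <= F v y) -> (forall v, strictly_terraced (F v)) ->
  circuit_sig owner A E F x = 0 -> owner k = owner k' ->
  flip_sum x k = flip_sum x k'.
Proof.
move=> F_ge0 terraced sig0 okk'; apply: eq_bigr => y xy.
apply: weight_flip_vertex => //.
move: sig0; rewrite circuit_sigE => /psumr_eq0P; apply => // z _.
by apply: prodr_ge0 => v _; exact: F_ge0.
Qed.

Lemma flip_sum_adj x u w :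
  circ_adj owner E u w ->
  exists k k', [/\ owner k = u, owner k' = w & flip_sum x k = flip_sum x k'].
Proof.
case/existsP => e /andP [eE /existsP [k /andP [ke /existsP [k' /andP [k'e]]]]].
case/and3P => nkk' /eqP ok /eqP ok'.
by exists k, k'; split => //; exact: flip_sum_edge eE ke k'e nkk'.
Qed.

End Circuit.

Theorem lemma14 (J V : finType) (owner : J -> V) (A : {set J})
    (E : {set {set J}})
    (F : forall v : V, {ffun {i : J | owner i == v} -> bool} -> rat) :
  is_circuit A E ->
  (forall v y, 0 <= F v y) ->
  circuit_connected owner E ->
  (forall v, strictly_terraced (F v)) ->
  strictly_terraced (circuit_sig owner A E F).
Proof.
move=> circuit F_ge0 connected terraced x i j sig0.
rewrite !circuit_sig_flip //.
apply: connect_fibres (connected _ _) => [k k' | u w].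
- exact: flip_sum_vertex.
- exact: flip_sum_adj.
Qed.
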